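(* Let $\overline L\ge L^\star$. Suppose we are on an event on which (i) for every round $t$ and every instantiated task $i$ that has been evaluated at least once, the utility interval $[\underline u^{(i)}_t,\overline u^{(i)}_t]$ (the interval computed at the most recent evaluation of task $i$) contains $u^{(i)}(\overline y^{(i)}_{s^{(i)}_t})$, and (ii) $f^{\star(i)}-\overline y^{(i)}_s\le\epsilon^{f,(i)}_s$ for all instantiated tasks $i$ and all $s\ge1$. For every instantiated task $i\in\mathcal I_t$ with local counter $s=s^{(i)}_t\ge1$ define $$\underline U^{(i)}_t:=\underline u^{(i)}_t,\qquad \overline U^{(i)}_t:=\mathrm{clip}_{[0,1]}\big(\overline u^{(i)}_t+\overline L\,\epsilon^{f,(i)}_{s}\big),$$ and $[\underline U^{(i)}_t,\overline U^{(i)}_t]:=[0,1]$ if $s^{(i)}_t=0$. Then $\underline U^{(i)}_t\le U^{(i)}\le\overline U^{(i)}_t$ for all such $t,i$. Moreover, if the utility interval width satisfies $\overline u^{(i)}_t-\underline u^{(i)}_t\le c_u\overline L\,\epsilon^{f,(i)}_{s^{(i)}_t}$ for some $c_u>0$, then $w^{(i)}_t:=\overline U^{(i)}_t-\underline U^{(i)}_t\le(c_u+1)\overline L\,\epsilon^{f,(i)}_{s^{(i)}_t}$.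
   Context: Tasks are indexed by $i\in\mathbb N$; task $i$ has compact domain $\mathcal X^{(i)}\subset\mathbb R^{d^{(i)}}$ and unknown objective $f^{(i)}$, $f^{\star(i)}:=\max_xf^{(i)}(x)$. In each global round $t$ one task $i_t$ is selected and one design evaluated on it; $s^{(i)}_t$ is the number of rounds $\le t$ in which task $i$ was selected; the incumbent is $\overline y^{(i)}_s:=\max_{r\le s}f^{(i)}(x^{(i)}_r)$ where $x^{(i)}_r$ is the $r$-th design evaluated on task $i$. $\epsilon^{f,(i)}_s:=2\sqrt{C_\lambda\beta^{(i)}_s\gamma^{(i)}_s/s}$ is the GP-UCB optimization-gap bound ($C_\lambda>0$ constant, $\beta^{(i)}_s,\gamma^{(i)}_s>0$ GP-UCB exploration and information-gain terms). Utilities $u^{(i)}:\mathbb R\to[0,1]$ are monotone nondecreasing and $L^{(i)}$-Lipschitz, $L^\star:=\sup_iL^{(i)}<\infty$; $U^{(i)}:=u^{(i)}(f^{\star(i)})$. $\mathrm{clip}_{[0,1]}(v):=\min\{1,\max\{0,v\}\}$. $\mathcal I_t$ is the set of tasks instantiated by round $t$. *)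

From HB Require Import structures.
From mathcomp Require Import all_boot all_order all_algebra.
From mathcomp Require Import all_classical all_reals all_analysis.
Set Implicit Arguments. Unset Strict Implicit. Unset Printing Implicit Defensive.
Import Order.TTheory GRing.Theory Num.Theory.
Import numFieldNormedType.Exports.
Local Open Scope classical_set_scope.
Local Open Scope ring_scope.

Section Defs.
Variable R : realType.

Definition clip01 (v : R) : R := Num.min 1 (Num.max 0 v).

(* f^{*(i)} := max_{x in X^(i)} f^(i)(x) (as the supremum of the image; the
   statement assumes the maximum is attained) *)
Definition fstar (n : nat) (X : set 'rV[R]_n) (f : 'rV[R]_n -> R) : R :=
  sup [set f x | x in X].

Definition max_attained (n : nat) (X : set 'rV[R]_n) (f : 'rV[R]_n -> R) : Prop :=
  exists2 x0, X x0 & forall x, X x -> f x <= f x0.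

(* incumbent  ybar_s := max_{1 <= r <= s} f(x_r)  (meaningful for s >= 1) *)
Definition incumbent (n : nat) (f : 'rV[R]_n -> R) (x : nat -> 'rV[R]_n) (s : nat) : R :=
  \big[Num.max/f (x 1%N)]_(1 <= r < s.+1) f (x r).

Definition local_count (sel : nat -> nat) (i t : nat) : nat :=
  count (fun r => sel r == i) (iota 1 t).

(* GP-UCB optimisation-gap bound  eps_s = 2 sqrt(C_lambda beta_s gamma_s / s) *)
Definition eps_f (Clam : R) (beta gamma : nat -> R) (s : nat) : R :=
  2 * Num.sqrt (Clam * beta s * gamma s / s%:R).

Definition Lstar (L : nat -> R) : R := sup (range L).

Definition lipschitz_const (u : R -> R) (L : R) : Prop :=
  forall a b, `|u a - u b| <= L * `|a - b|.

Definition Ulo (s : nat) (ulo : R) : R := if s == 0%N then 0 else ulo.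
Definition Uhi (Lbar : R) (s : nat) (uhi epss : R) : R :=
  if s == 0%N then 1 else clip01 (uhi + Lbar * epss).

End Defs.

From HB Require Import structures.
From mathcomp Require Import all_boot all_order all_algebra.
From mathcomp Require Import all_classical all_reals all_analysis.
From mathcomp Require Import lra.
Set Implicit Arguments. Unset Strict Implicit.
Import Order.TTheory GRing.Theory Num.Theory.
Import numFieldNormedType.Exports.
Local Open Scope classical_set_scope.
Local Open Scope ring_scope.

(* The incumbent never exceeds fstar, so by monotonicity the lower end of its
   utility interval lies below u(fstar).  Upwards, u(fstar) exceeds u(incumbent)
   by at most L (fstar - incumbent) <= Lbar eps, by Lipschitz continuity and the
   GP-UCB gap bound, and clipping to [0,1] cannot cut below a utility value.
   The width bound holds because clipping only lowers a nonnegative upper end. *)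

Section UtilityBounds.
Variable R : realType.

Lemma Lstar_ge (L : nat -> R) i : has_ubound (range L) -> L i <= Lstar L.
Proof.
move=> ubL; apply: sup_upper_bound; last by exists i.
by split => //; exists (L i), i.
Qed.

Lemma lipschitz_const_ge0 (u : R -> R) L : lipschitz_const u L -> 0 <= L.
Proof.
by move=> lipu; have := lipu 1 0; rewrite subr0 normr1 mulr1; apply: le_trans.
Qed.

Lemma lipschitz_const_le_addr (u : R -> R) L Lbar y y' eps :
  lipschitz_const u L -> L <= Lbar -> y <= y' -> y' - y <= eps ->
  u y' <= u y + Lbar * eps.
Proof.
move=> lipu LleLbar yley' gap.
have L0 := lipschitz_const_ge0 lipu.
have du : u y' - u y <= L * (y' - y).
  by apply: le_trans (ler_norm _) _; rewrite -[y' - y]ger0_norm ?subr_ge0.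
have : L * (y' - y) <= Lbar * eps by apply: ler_pM; rewrite ?subr_ge0.
lra.
Qed.

Lemma eps_f_ge0 Clam (beta gamma : nat -> R) s : 0 <= eps_f Clam beta gamma s.
Proof. by rewrite /eps_f mulr_ge0 // sqrtr_ge0. Qed.

Lemma fstar_ge n (X : set 'rV[R]_n) f y :
  max_attained X f -> X y -> f y <= fstar X f.
Proof.
move=> [x0 _ maxx0] Xy; apply: sup_upper_bound; last by exists y.
split; first by exists (f y), y.
by exists (f x0) => _ [z Xz <-]; exact: maxx0.
Qed.

Lemma incumbent_le_fstar n (X : set 'rV[R]_n) f (x : nat -> 'rV[R]_n) s :
  max_attained X f -> (forall r, (1 <= r)%N -> X (x r)) ->
  incumbent f x s <= fstar X f.
Proof.
move=> maxf Xx; rewrite /incumbent big_nat_cond.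
apply: (big_ind (fun y => y <= fstar X f)); first exact/fstar_ge/Xx.
  by move=> a b ha hb; rewrite ge_max ha hb.
by move=> r /andP[/andP[r1 _] _]; apply/fstar_ge/Xx.
Qed.

Lemma clip01_ge (v w : R) : w <= 1 -> w <= v -> w <= clip01 v.
Proof. by move=> w1 wv; rewrite /clip01 le_min w1 le_max wv orbT. Qed.

Lemma clip01_le (v : R) : 0 <= v -> clip01 v <= v.
Proof. by move=> v0; rewrite /clip01 (max_idPr v0) ge_min lexx orbT. Qed.

Lemma Ulo_Uhi_bracket (Lbar : R) s ulo uhi eps U :
  0 <= U <= 1 -> (s != 0%N -> ulo <= U <= uhi + Lbar * eps) ->
  Ulo s ulo <= U <= Uhi Lbar s uhi eps.
Proof.
rewrite /Ulo /Uhi; have [//|s0] := eqVneq s 0%N.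
move=> /andP[_ U1] /(_ isT) /andP[uloU Uuhi].
by rewrite uloU clip01_ge.
Qed.

Lemma Uhi_sub_Ulo_le (Lbar : R) s ulo uhi eps cu :
  s != 0%N -> 0 <= uhi + Lbar * eps -> uhi - ulo <= cu * Lbar * eps ->
  Uhi Lbar s uhi eps - Ulo s ulo <= (cu + 1) * Lbar * eps.
Proof.
rewrite /Ulo /Uhi => /negbTE -> hi0 width.
have := clip01_le hi0; lra.
Qed.

End UtilityBounds.

Theorem theorem4p3 (R : realType)
  (* task i: dimension d i, compact domain X i in R^(d i), objective f i *)
  (d : nat -> nat) (X : forall i, set 'rV[R]_(d i)) (f : forall i, 'rV[R]_(d i) -> R)
  (* x i r : r-th design evaluated on task i (r >= 1) *)
  (x : forall i, nat -> 'rV[R]_(d i))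
  (* sel t : task selected in global round t (t >= 1) *)
  (sel : nat -> nat)
  (* I t : tasks instantiated by round t *)
  (I : nat -> set nat)
  (* GP-UCB constants *)
  (Clam : R) (beta gamma : nat -> nat -> R)
  (* utilities and Lipschitz constants *)
  (u : nat -> R -> R) (L : nat -> R) (Lbar : R)
  (* utility intervals computed at the most recent evaluation of task i *)
  (ulo uhi : nat -> nat -> R) :
  (forall i, compact (X i) /\ X i !=set0) ->
  (forall i, max_attained (X i) (f i)) ->
  (forall i r, (1 <= r)%N -> X i (x i r)) ->
  0 < Clam ->
  (forall i s, 0 < beta i s) -> (forall i s, 0 < gamma i s) ->
  (forall i v, 0 <= u i v <= 1) ->
  (forall i, {homo u i : a b / a <= b}) ->
  (forall i, lipschitz_const (u i) (L i)) ->
  has_ubound (range L) ->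
  Lstar L <= Lbar ->
  (* event (i) *)
  (forall t i, I t i -> (1 <= local_count sel i t)%N ->
     ulo i t <= u i (incumbent (f i) (x i) (local_count sel i t)) <= uhi i t) ->
  (* event (ii) *)
  (forall t i s, I t i -> (1 <= s)%N ->
     fstar (X i) (f i) - incumbent (f i) (x i) s <= eps_f Clam (beta i) (gamma i) s) ->
  (forall t i, I t i ->
     Ulo (local_count sel i t) (ulo i t) <= u i (fstar (X i) (f i))
     <= Uhi Lbar (local_count sel i t) (uhi i t)
          (eps_f Clam (beta i) (gamma i) (local_count sel i t)))
  /\
  (forall cu : R, 0 < cu -> forall t i, I t i -> (1 <= local_count sel i t)%N ->
     uhi i t - ulo i t <= cu * Lbar * eps_f Clam (beta i) (gamma i) (local_count sel i t) ->
     Uhi Lbar (local_count sel i t) (uhi i t)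
          (eps_f Clam (beta i) (gamma i) (local_count sel i t))
     - Ulo (local_count sel i t) (ulo i t)
     <= (cu + 1) * Lbar * eps_f Clam (beta i) (gamma i) (local_count sel i t)).
Proof.
move=> _ maxf Xx _ _ _ u01 homou lipu ubL LleLbar event_u event_f.
have LiLbar i : L i <= Lbar by apply: le_trans (Lstar_ge i ubL) LleLbar.
have Lbar0 : 0 <= Lbar by apply: le_trans (lipschitz_const_ge0 (lipu 0%N)) (LiLbar 0%N).
have ybar_le i s : incumbent (f i) (x i) s <= fstar (X i) (f i).
  exact: incumbent_le_fstar (maxf i) (Xx i).
split=> [t i It | cu _ t i It s1 width].
  apply: Ulo_Uhi_bracket; first exact: u01.
  rewrite -lt0n => s1; have /andP[lo hi] := event_u t i It s1.
  rewrite (le_trans lo (homou _ _ _ (ybar_le _ _))) /=.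
  have := lipschitz_const_le_addr (lipu i) (LiLbar i) (ybar_le i _) (event_f t i _ It s1).
  by move/le_trans; apply; rewrite lerD2r.
apply: Uhi_sub_Ulo_le width; first by rewrite -lt0n.
have /andP[_ hi] := event_u t i It s1.
have /andP[u0 _] := u01 i (incumbent (f i) (x i) (local_count sel i t)).
by rewrite addr_ge0 ?mulr_ge0 ?eps_f_ge0 // (le_trans u0 hi).
Qed.
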